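(* Let $X$ be any one of the sequences $F,L,J,j,P,Q$. Then for all integers $a,b,c,d,e,m$, $$(X_{d-a}X_{e-b}-X_{e-a}X_{d-b})X_{m-c}=(X_{d-c}X_{e-b}-X_{e-c}X_{d-b})X_{m-a}+(X_{d-a}X_{e-c}-X_{e-a}X_{d-c})X_{m-b}.$$
   Context: All sequences are indexed by $n\in\mathbb Z$. Fibonacci numbers $F_n$ and Lucas numbers $L_n$: $F_n=F_{n-1}+F_{n-2}$, $L_n=L_{n-1}+L_{n-2}$ for all $n\in\mathbb Z$, with $F_0=0,F_1=1,L_0=2,L_1=1$ (so $F_{-n}=(-1)^{n-1}F_n$, $L_{-n}=(-1)^nL_n$). Jacobsthal numbers $J_n$ and Jacobsthal–Lucas numbers $j_n$: $J_n=J_{n-1}+2J_{n-2}$, $j_n=j_{n-1}+2j_{n-2}$ for all $n\in\mathbb Z$, with $J_0=0,J_1=1,j_0=2,j_1=1$ (so $J_{-n}=(-1)^{n-1}2^{-n}J_n$, $j_{-n}=(-1)^n2^{-n}j_n$, rational for negative index). Pell numbers $P_n$ and Pell–Lucas numbers $Q_n$: $P_n=2P_{n-1}+P_{n-2}$, $Q_n=2Q_{n-1}+Q_{n-2}$ for all $n\in\mathbb Z$, with $P_0=0,P_1=1,Q_0=2,Q_1=2$ (so $P_{-n}=(-1)^{n-1}P_n$, $Q_{-n}=(-1)^nQ_n$). *)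

From Stdlib Require Import Reals ZArith Lra Lia.
Open Scope R_scope.

(* Second-order sequence W_n = p W_{n-1} + q W_{n-2} (q <> 0), W_0 = a, W_1 = b,
   extended to all n in Z by running the recurrence backwards:
   W_{n-2} = (W_n - p W_{n-1}) / q. *)
Fixpoint lrs_fwd (p q a b : R) (n : nat) : R * R :=
  match n with
  | O => (a, b)
  | S k => let (x, y) := lrs_fwd p q a b k in (y, p * y + q * x)
  end.
(* lrs_fwd n = (W_n, W_{n+1}) *)

Fixpoint lrs_bwd (p q a b : R) (n : nat) : R * R :=
  match n with
  | O => (a, b)
  | S k => let (x, y) := lrs_bwd p q a b k in ((y - p * x) / q, x)
  end.
(* lrs_bwd n = (W_{-n}, W_{-n+1}) *)

Definition lrs (p q a b : R) (n : Z) : R :=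
  if (0 <=? n)%Z then fst (lrs_fwd p q a b (Z.to_nat n))
  else fst (lrs_bwd p q a b (Z.to_nat (- n))).

Definition Fib : Z -> R := lrs 1 1 0 1.
Definition Luc : Z -> R := lrs 1 1 2 1.
Definition Jac : Z -> R := lrs 1 2 0 1.
Definition JacL : Z -> R := lrs 1 2 2 1.
Definition Pell : Z -> R := lrs 2 1 0 1.
Definition PellL : Z -> R := lrs 2 1 2 2.

(* The solutions of W(n+2) = p W(n+1) + q W(n) with q <> 0 form a two-dimensional
   space, spanned by the solutions G, H with (G 0, G 1) = (1, 0) and (H 0, H 1) = (0, 1).
   Hence X(i - j) = G i * X(-j) + H i * X(1 - j) is a bilinear pairing of a vector
   depending on i with a vector depending on j, both in R^2, and the identity is the
   linear dependence of any three vectors of R^2 (a cofactor expansion of a vanishing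
   3x3 determinant): it holds as a polynomial identity in these coordinates. *)
From Stdlib Require Import Reals ZArith Lra Lia.
Open Scope R_scope.

Definition is_lrs (p q : R) (W : Z -> R) : Prop :=
  forall n, W (n + 2)%Z = p * W (n + 1)%Z + q * W n.

Section Lrs.
Variables p q a b : R.
Hypothesis q_neq0 : q <> 0.

Lemma fst_lrs_fwdS n : fst (lrs_fwd p q a b (S n)) = snd (lrs_fwd p q a b n).
Proof. simpl; destruct (lrs_fwd p q a b n); reflexivity. Qed.

Lemma snd_lrs_fwdS n : snd (lrs_fwd p q a b (S n)) =
  p * snd (lrs_fwd p q a b n) + q * fst (lrs_fwd p q a b n).
Proof. simpl; destruct (lrs_fwd p q a b n); reflexivity. Qed.

Lemma fst_lrs_bwdS n : fst (lrs_bwd p q a b (S n)) =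
  (snd (lrs_bwd p q a b n) - p * fst (lrs_bwd p q a b n)) / q.
Proof. simpl; destruct (lrs_bwd p q a b n); reflexivity. Qed.

Lemma snd_lrs_bwdS n : snd (lrs_bwd p q a b (S n)) = fst (lrs_bwd p q a b n).
Proof. simpl; destruct (lrs_bwd p q a b n); reflexivity. Qed.

Lemma lrs_of_nat k : lrs p q a b (Z.of_nat k) = fst (lrs_fwd p q a b k).
Proof.
  unfold lrs; replace (0 <=? Z.of_nat k)%Z with true by (symmetry; apply Z.leb_le; lia).
  now rewrite Nat2Z.id.
Qed.

Lemma lrs_opp_of_natS k : lrs p q a b (- Z.of_nat (S k)) = fst (lrs_bwd p q a b (S k)).
Proof.
  unfold lrs; replace (0 <=? - Z.of_nat (S k))%Z with false by (symmetry; apply Z.leb_gt; lia).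
  now rewrite Z.opp_involutive, Nat2Z.id.
Qed.

Lemma lrs_is_lrs : is_lrs p q (lrs p q a b).
Proof.
  intro n; destruct (Z_le_gt_dec 0 n) as [n_ge0 | n_lt0].
  - destruct (Z_of_nat_complete n n_ge0) as [k ->].
    replace (Z.of_nat k + 2)%Z with (Z.of_nat (S (S k))) by lia.
    replace (Z.of_nat k + 1)%Z with (Z.of_nat (S k)) by lia.
    rewrite !lrs_of_nat, (fst_lrs_fwdS (S k)), snd_lrs_fwdS, fst_lrs_fwdS; ring.
  - destruct (Z.eq_dec n (-1)) as [-> | n_neq].
    + replace (-1 + 2)%Z with (Z.of_nat 1) by lia.
      replace (-1 + 1)%Z with (Z.of_nat 0) by lia.
      replace (-1)%Z with (- Z.of_nat 1)%Z by lia.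
      rewrite !lrs_of_nat, lrs_opp_of_natS, fst_lrs_bwdS; simpl; field; exact q_neq0.
    + assert (exists k, n = (- Z.of_nat (S (S k)))%Z) as [k ->]
        by (exists (Z.to_nat (- n - 2)); lia).
      replace (- Z.of_nat (S (S k)) + 1)%Z with (- Z.of_nat (S k))%Z by lia.
      replace (- Z.of_nat (S (S k)) + 2)%Z with (- Z.of_nat k)%Z by lia.
      rewrite !lrs_opp_of_natS, (fst_lrs_bwdS (S k)), snd_lrs_bwdS.
      destruct k as [|k].
      * change (- Z.of_nat 0)%Z with (Z.of_nat 0); rewrite lrs_of_nat; simpl.
        field; exact q_neq0.
      * rewrite lrs_opp_of_natS; field; exact q_neq0.
Qed.

End Lrs.

Section Solutions.
Variables p q : R.
Hypothesis q_neq0 : q <> 0.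

Lemma is_lrs_eq0 (D : Z -> R) :
  is_lrs p q D -> D 0%Z = 0 -> D 1%Z = 0 -> forall n, D n = 0.
Proof.
  intros recD D0 D1.
  enough (both : forall n, D n = 0 /\ D (n + 1)%Z = 0) by (intro n; apply both).
  intro k; induction k as [| k [Dk Dk1] | k [Dk Dk1]] using Z.peano_ind.
  - now split.
  - split; [now replace (Z.succ k) with (k + 1)%Z by lia|].
    replace (Z.succ k + 1)%Z with (k + 2)%Z by lia.
    rewrite recD, Dk, Dk1; ring.
  - split; [|now replace (Z.pred k + 1)%Z with k by lia].
    pose proof (recD (Z.pred k)) as rec.
    replace (Z.pred k + 2)%Z with (k + 1)%Z in rec by lia.
    replace (Z.pred k + 1)%Z with k in rec by lia.
    rewrite Dk, Dk1 in rec.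
    apply (Rmult_eq_reg_l q); [lra | exact q_neq0].
Qed.

Lemma is_lrs_shift_decomp (W : Z -> R) (s : Z) : is_lrs p q W ->
  forall k, W (k + s)%Z = lrs p q 1 0 k * W s + lrs p q 0 1 k * W (s + 1)%Z.
Proof.
  intros recW k; apply Rminus_diag_uniq; revert k.
  apply (is_lrs_eq0 (fun k => W (k + s)%Z
           - (lrs p q 1 0 k * W s + lrs p q 0 1 k * W (s + 1)%Z))%R).
  - intro k; cbv beta.
    replace (k + 2 + s)%Z with (k + s + 2)%Z by lia.
    replace (k + 1 + s)%Z with (k + s + 1)%Z by lia.
    rewrite recW, !lrs_is_lrs by exact q_neq0; ring.
  - replace (0 + s)%Z with s by lia.
    change (lrs p q 1 0 0) with 1; change (lrs p q 0 1 0) with 0; ring.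
  - replace (1 + s)%Z with (s + 1)%Z by lia.
    change (lrs p q 1 0 1) with 0; change (lrs p q 0 1 1) with 1; ring.
Qed.

Lemma is_lrs_det_identity (X : Z -> R) (a b c d e m : Z) : is_lrs p q X ->
  (X (d - a)%Z * X (e - b)%Z - X (e - a)%Z * X (d - b)%Z) * X (m - c)%Z =
  (X (d - c)%Z * X (e - b)%Z - X (e - c)%Z * X (d - b)%Z) * X (m - a)%Z +
  (X (d - a)%Z * X (e - c)%Z - X (e - a)%Z * X (d - c)%Z) * X (m - b)%Z.
Proof.
  intro recX.
  assert (pairing : forall i j, X (i - j)%Z =
            lrs p q 1 0 i * X (- j)%Z + lrs p q 0 1 i * X (- j + 1)%Z).
  { intros i j; rewrite <- is_lrs_shift_decomp by exact recX; f_equal; lia. }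
  rewrite !pairing; ring.
Qed.

End Solutions.

Theorem theorem2 (X : Z -> R)
  (hX : X = Fib \/ X = Luc \/ X = Jac \/ X = JacL \/ X = Pell \/ X = PellL)
  (a b c d e m : Z) :
  (X (d - a)%Z * X (e - b)%Z - X (e - a)%Z * X (d - b)%Z) * X (m - c)%Z =
  (X (d - c)%Z * X (e - b)%Z - X (e - c)%Z * X (d - b)%Z) * X (m - a)%Z +
  (X (d - a)%Z * X (e - c)%Z - X (e - a)%Z * X (d - c)%Z) * X (m - b)%Z.
Proof.
  destruct hX as [-> | [-> | [-> | [-> | [-> | ->]]]]];
    (eapply is_lrs_det_identity; [| apply lrs_is_lrs]); lra.
Qed.
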